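(* Let $0<t_1<t_2<t_3<t_4$ be real numbers and let $p_i=(t_i,t_i^2,t_i^3)\in\mathbb{R}^3$ for $1\le i\le 4$. Then the unique sphere in $\mathbb{R}^3$ passing through $p_1,\dots,p_4$ has the following property: for every $t\in(0,t_1)\cup(t_2,t_3)\cup(t_4,\infty)$, the point $(t,t^2,t^3)$ lies strictly outside the sphere, i.e., its distance from the center of the sphere is strictly greater than the radius.
   Context: The moment curve in $\mathbb{R}^d$ is the curve $t\mapsto(t,t^2,\dots,t^d)$ for $t>0$. *)

From Stdlib Require Import Reals.
Open Scope R_scope.

Definition pt3 : Type := (R * R * R)%type.

Definition dist3 (p q : pt3) : R :=
  let '(x1, y1, z1) := p in
  let '(x2, y2, z2) := q in
  sqrt ((x1 - x2) ^ 2 + (y1 - y2) ^ 2 + (z1 - z2) ^ 2).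

Definition moment3 (t : R) : pt3 := (t, t ^ 2, t ^ 3).

Definition on_sphere (c : pt3) (r : R) (p : pt3) : Prop := dist3 c p = r.

(* For a center c, the squared distance from c to (t, t^2, t^3) is a monic polynomial of
   degree 6 in t. Choosing c and the squared radius r^2 by matching coefficients makes
   |c - (t,t^2,t^3)|^2 - r^2 = (t - t1)(t - t2)(t - t3)(t - t4) q(t) with a quadratic q of
   negative discriminant, so the sign is that of the quartic: positive exactly on
   (-oo,t1) U (t2,t3) U (t4,oo).  Uniqueness: the squared
   distances to two centers differ by a cubic in t, which cannot have four distinct roots
   unless it vanishes. *)

From Stdlib Require Import Reals Lra Psatz.
Open Scope R_scope.

Definition sqdist3 (p q : pt3) : R :=
  let '(x1, y1, z1) := p in
  let '(x2, y2, z2) := q in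
  (x1 - x2) ^ 2 + (y1 - y2) ^ 2 + (z1 - z2) ^ 2.

Lemma dist3_sqdist3 (p q : pt3) : dist3 p q = sqrt (sqdist3 p q).
Proof. now destruct p as [[x1 y1] z1], q as [[x2 y2] z2]. Qed.

Lemma sqdist3_ge0 (p q : pt3) : 0 <= sqdist3 p q.
Proof.
  destruct p as [[x1 y1] z1], q as [[x2 y2] z2]; simpl.
  pose proof (pow2_ge_0 (x1 - x2)); pose proof (pow2_ge_0 (y1 - y2)).
  pose proof (pow2_ge_0 (z1 - z2)); lra.
Qed.

Lemma sqdist3_eq0 (p q : pt3) : sqdist3 p q = 0 -> p = q.
Proof.
  destruct p as [[x1 y1] z1], q as [[x2 y2] z2]; simpl; intros H.
  pose proof (pow2_ge_0 (x1 - x2)); pose proof (pow2_ge_0 (y1 - y2)).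
  pose proof (pow2_ge_0 (z1 - z2)).
  assert (x1 = x2) by nra; assert (y1 = y2) by nra; assert (z1 = z2) by nra.
  now subst.
Qed.

Lemma on_sphere_sqdist3 (c : pt3) (r : R) (p : pt3) :
  0 <= r -> on_sphere c r p <-> sqdist3 c p = r ^ 2.
Proof.
  intros r_ge0; unfold on_sphere; rewrite dist3_sqdist3; split; intros H.
  - rewrite <- H, pow2_sqrt; [reflexivity | apply sqdist3_ge0].
  - rewrite H; apply sqrt_pow2, r_ge0.
Qed.

Lemma moment3_inj (s t : R) : moment3 s = moment3 t -> s = t.
Proof. now intros [= ->]. Qed.

Lemma Rmult_eq0_r (x y : R) : x <> 0 -> x * y = 0 -> y = 0.
Proof. intros x_neq0 H; destruct (Rmult_integral _ _ H); [contradiction | assumption]. Qed.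

Lemma linear_eq0 (p1 p0 x y : R) :
  x <> y -> p1 * x + p0 = 0 -> p1 * y + p0 = 0 -> p1 = 0 /\ p0 = 0.
Proof.
  intros xy Px Py.
  assert (p1_eq0 : p1 = 0).
  { apply (Rmult_eq0_r (x - y)); [lra |].
    replace ((x - y) * p1) with ((p1 * x + p0) - (p1 * y + p0)) by ring; lra. }
  subst p1; lra.
Qed.

(* Synthetic division by t - x: p(t) - p(x) = (t - x) q(t), and q vanishes at the other roots. *)
Lemma quadratic_eq0 (p2 p1 p0 x y z : R) :
  x <> y -> x <> z -> y <> z ->
  p2 * x ^ 2 + p1 * x + p0 = 0 -> p2 * y ^ 2 + p1 * y + p0 = 0 ->
  p2 * z ^ 2 + p1 * z + p0 = 0 ->
  p2 = 0 /\ p1 = 0 /\ p0 = 0.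
Proof.
  intros xy xz yz Px Py Pz.
  assert (quotient_root : forall t, t <> x -> p2 * t ^ 2 + p1 * t + p0 = 0 ->
            p2 * t + (p1 + p2 * x) = 0).
  { intros t tx Pt; apply (Rmult_eq0_r (t - x)); [lra |].
    replace ((t - x) * _) with ((p2 * t ^ 2 + p1 * t + p0) - (p2 * x ^ 2 + p1 * x + p0))
      by ring; lra. }
  destruct (linear_eq0 p2 (p1 + p2 * x) y z yz) as [-> H1];
    [now apply quotient_root | now apply quotient_root |].
  assert (p1 = 0) by lra; subst p1; repeat split; lra.
Qed.

Lemma cubic_eq0 (p3 p2 p1 p0 x y z w : R) :
  x <> y -> x <> z -> x <> w -> y <> z -> y <> w -> z <> w ->
  p3 * x ^ 3 + p2 * x ^ 2 + p1 * x + p0 = 0 ->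
  p3 * y ^ 3 + p2 * y ^ 2 + p1 * y + p0 = 0 ->
  p3 * z ^ 3 + p2 * z ^ 2 + p1 * z + p0 = 0 ->
  p3 * w ^ 3 + p2 * w ^ 2 + p1 * w + p0 = 0 ->
  p3 = 0 /\ p2 = 0 /\ p1 = 0 /\ p0 = 0.
Proof.
  intros xy xz xw yz yw zw Px Py Pz Pw.
  assert (quotient_root : forall t, t <> x ->
            p3 * t ^ 3 + p2 * t ^ 2 + p1 * t + p0 = 0 ->
            p3 * t ^ 2 + (p2 + p3 * x) * t + (p1 + p2 * x + p3 * x ^ 2) = 0).
  { intros t tx Pt; apply (Rmult_eq0_r (t - x)); [lra |].
    replace ((t - x) * _) with
      ((p3 * t ^ 3 + p2 * t ^ 2 + p1 * t + p0) - (p3 * x ^ 3 + p2 * x ^ 2 + p1 * x + p0))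
      by ring; lra. }
  destruct (quadratic_eq0 p3 (p2 + p3 * x) (p1 + p2 * x + p3 * x ^ 2) y z w yz yw zw)
    as [-> [H2 H1]]; try now apply quotient_root.
  assert (p2 = 0) by lra; subst p2.
  assert (p1 = 0) by lra; subst p1.
  repeat split; lra.
Qed.

Lemma sqdist3_moment3_sub (a b d a' b' d' r r' t : R) :
  (sqdist3 (a', b', d') (moment3 t) - r' ^ 2) - (sqdist3 (a, b, d) (moment3 t) - r ^ 2) =
  2 * (d - d') * t ^ 3 + 2 * (b - b') * t ^ 2 + 2 * (a - a') * t
  + ((a' ^ 2 + b' ^ 2 + d' ^ 2 - r' ^ 2) - (a ^ 2 + b ^ 2 + d ^ 2 - r ^ 2)).
Proof. simpl; ring. Qed.

Lemma sphere_through_moment3_unique (t1 t2 t3 t4 : R) (c c' : pt3) (r r' : R) :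
  t1 <> t2 -> t1 <> t3 -> t1 <> t4 -> t2 <> t3 -> t2 <> t4 -> t3 <> t4 ->
  0 <= r -> 0 <= r' ->
  on_sphere c r (moment3 t1) -> on_sphere c r (moment3 t2) ->
  on_sphere c r (moment3 t3) -> on_sphere c r (moment3 t4) ->
  on_sphere c' r' (moment3 t1) -> on_sphere c' r' (moment3 t2) ->
  on_sphere c' r' (moment3 t3) -> on_sphere c' r' (moment3 t4) ->
  c' = c /\ r' = r.
Proof.
  intros t12 t13 t14 t23 t24 t34 r_ge0 r'_ge0.
  rewrite !(on_sphere_sqdist3 c r _ r_ge0), !(on_sphere_sqdist3 c' r' _ r'_ge0).
  destruct c as [[a b] d], c' as [[a' b'] d'].
  intros S1 S2 S3 S4 S1' S2' S3' S4'.
  assert (difference_root : forall t,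
            sqdist3 (a, b, d) (moment3 t) = r ^ 2 ->
            sqdist3 (a', b', d') (moment3 t) = r' ^ 2 ->
            2 * (d - d') * t ^ 3 + 2 * (b - b') * t ^ 2 + 2 * (a - a') * t
            + ((a' ^ 2 + b' ^ 2 + d' ^ 2 - r' ^ 2) - (a ^ 2 + b ^ 2 + d ^ 2 - r ^ 2)) = 0).
  { intros t St St'; rewrite <- sqdist3_moment3_sub, St, St'; ring. }
  destruct (cubic_eq0 (2 * (d - d')) (2 * (b - b')) (2 * (a - a'))
              ((a' ^ 2 + b' ^ 2 + d' ^ 2 - r' ^ 2) - (a ^ 2 + b ^ 2 + d ^ 2 - r ^ 2))
              t1 t2 t3 t4 t12 t13 t14 t23 t24 t34)
    as [Hd [Hb [Ha Hr]]]; try now apply difference_root.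
  assert (a' = a) by lra; assert (b' = b) by lra; assert (d' = d) by lra; subst.
  split; [reflexivity | nra].
Qed.

Section MomentSphere.

Variables t1 t2 t3 t4 : R.

Let e1 := t1 + t2 + t3 + t4.
Let e2 := t1 * t2 + t1 * t3 + t1 * t4 + t2 * t3 + t2 * t4 + t3 * t4.
Let e3 := t1 * t2 * t3 + t1 * t2 * t4 + t1 * t3 * t4 + t2 * t3 * t4.
Let e4 := t1 * t2 * t3 * t4.
Let beta := 1 + e1 ^ 2 - e2.

(* Obtained by matching the coefficients of t^5, ..., t^0 in
   |c - (t,t^2,t^3)|^2 - r^2 = (t^4 - e1 t^3 + e2 t^2 - e3 t + e4)(t^2 + e1 t + beta). *)
Definition moment_center : pt3 :=
  ((e3 * beta - e4 * e1) / 2,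
   (1 - e2 * beta + e3 * e1 - e4) / 2,
   (e1 * beta - e2 * e1 + e3) / 2).

Definition moment_sqradius : R :=
  let '(a, b, d) := moment_center in a ^ 2 + b ^ 2 + d ^ 2 - e4 * beta.

Lemma sqdist3_moment_center (t : R) :
  sqdist3 moment_center (moment3 t) - moment_sqradius =
  (t - t1) * (t - t2) * (t - t3) * (t - t4) * (t ^ 2 + e1 * t + beta).
Proof. unfold moment_sqradius, moment_center; simpl; unfold beta, e1, e2, e3, e4; field. Qed.

Lemma moment_quadratic_pos (t : R) : 0 < t ^ 2 + e1 * t + beta.
Proof.
  assert (beta_big : e1 ^ 2 / 4 < beta).
  { assert (beta_excess : beta - e1 ^ 2 / 4
            = 1 + (t1 ^ 2 + t2 ^ 2 + t3 ^ 2 + t4 ^ 2) / 2 + e1 ^ 2 / 4)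
      by (unfold beta, e2, e1; field).
    pose proof (pow2_ge_0 t1); pose proof (pow2_ge_0 t2); pose proof (pow2_ge_0 t3);
      pose proof (pow2_ge_0 t4); pose proof (pow2_ge_0 e1); lra. }
  pose proof (pow2_ge_0 (t + e1 / 2)); nra.
Qed.

Lemma sqdist3_moment_center_root (t : R) :
  t = t1 \/ t = t2 \/ t = t3 \/ t = t4 ->
  sqdist3 moment_center (moment3 t) = moment_sqradius.
Proof.
  intros Ht; apply Rminus_diag_uniq; rewrite sqdist3_moment_center.
  destruct Ht as [-> | [-> | [-> | ->]]]; ring.
Qed.

Lemma moment_sqradius_pos : t1 <> t2 -> 0 < moment_sqradius.
Proof.
  intros t12.
  pose proof (sqdist3_moment_center_root t1 ltac:(auto)) as on1.
  pose proof (sqdist3_moment_center_root t2 ltac:(auto)) as on2.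
  rewrite <- on1.
  destruct (Rle_lt_or_eq_dec _ _ (sqdist3_ge0 moment_center (moment3 t1)))
    as [pos | zero]; [exact pos | exfalso].
  apply t12, moment3_inj.
  transitivity moment_center; [symmetry |]; apply sqdist3_eq0; congruence.
Qed.

Lemma sqdist3_moment_center_gt (t : R) :
  t1 < t2 -> t2 < t3 -> t3 < t4 ->
  t < t1 \/ t2 < t < t3 \/ t4 < t ->
  moment_sqradius < sqdist3 moment_center (moment3 t).
Proof.
  intros t12 t23 t34 Ht.
  assert (quartic_pos : 0 < (t - t1) * (t - t2) * ((t - t3) * (t - t4))).
  { destruct Ht as [Ht | [Ht | Ht]]; apply Rmult_lt_0_compat; nra. }
  apply Rlt_0_minus; rewrite sqdist3_moment_center.
  pose proof (moment_quadratic_pos t).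
  replace ((t - t1) * (t - t2) * (t - t3) * (t - t4))
    with ((t - t1) * (t - t2) * ((t - t3) * (t - t4))) by ring.
  now apply Rmult_lt_0_compat.
Qed.

End MomentSphere.

Theorem mainTheorem7 (t1 t2 t3 t4 : R) :
  0 < t1 -> t1 < t2 -> t2 < t3 -> t3 < t4 ->
  exists (c : pt3) (r : R),
    0 < r /\
    on_sphere c r (moment3 t1) /\ on_sphere c r (moment3 t2) /\
    on_sphere c r (moment3 t3) /\ on_sphere c r (moment3 t4) /\
    (forall (c' : pt3) (r' : R), 0 < r' ->
       on_sphere c' r' (moment3 t1) -> on_sphere c' r' (moment3 t2) ->
       on_sphere c' r' (moment3 t3) -> on_sphere c' r' (moment3 t4) ->
       c' = c /\ r' = r) /\
    (forall t : R,
       (0 < t < t1 \/ t2 < t < t3 \/ t4 < t) ->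
       dist3 c (moment3 t) > r).
Proof.
  intros _ t12 t23 t34.
  pose proof (moment_sqradius_pos t1 t2 t3 t4 ltac:(lra)) as rho_pos.
  set (c := moment_center t1 t2 t3 t4) in *.
  set (rho := moment_sqradius t1 t2 t3 t4) in *.
  assert (on_c : forall t, t = t1 \/ t = t2 \/ t = t3 \/ t = t4 ->
                 on_sphere c (sqrt rho) (moment3 t)).
  { intros t Ht; apply on_sphere_sqdist3; [apply sqrt_pos |].
    rewrite pow2_sqrt by lra; now apply sqdist3_moment_center_root. }
  exists c, (sqrt rho).
  split; [now apply sqrt_lt_R0 |].
  do 4 (split; [apply on_c; tauto |]).
  split.
  - intros c' r' r'_pos S1 S2 S3 S4.
    apply (sphere_through_moment3_unique t1 t2 t3 t4); try lra; try apply sqrt_pos;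
      auto using on_c.
  - intros t Ht; rewrite dist3_sqdist3; apply sqrt_lt_1_alt; split; [lra |].
    apply sqdist3_moment_center_gt; lra.
Qed.
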